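(* Let $p$ be a prime, $n\ge1$, and let $C=\langle a\rangle$ be a cyclic group of order $p^n$. Let $H$ be a finite group acting on $C$ by group automorphisms, and let $Ha$ denote the $H$-orbit of the generator $a$. Then $m_{\mathsf{faithful}}(C\rtimes H)\ge |Ha|$. Moreover, equality holds if $H$ acts faithfully on $C$.
   Context: For a finite group $G$, $m_{\mathsf{faithful}}(G)$ denotes the smallest dimension of a faithful complex representation of $G$. *)

From HB Require Import structures.
From Stdlib Require Import ClassicalEpsilon.
From mathcomp Require Import all_boot all_order all_algebra all_fingroup all_solvable all_field all_character.
Set Implicit Arguments. Unset Strict Implicit. Unset Printing Implicit Defensive.

(* A faithful complex representation: algC = algebraic closure of Q, the
   standard MathComp stand-in for C (every complex representation of a finite
   group is realizable over algebraic numbers). *)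
Definition has_faithful_repr (gT : finGroupType) (G : {group gT}) (n : nat) : Prop :=
  exists rG : mx_representation algC G n, mx_faithful rG.

(* boolean version (classical decision), needed by ex_minn *)
Definition has_faithful_reprb (gT : finGroupType) (G : {group gT}) (n : nat) : bool :=
  if excluded_middle_informative (has_faithful_repr G n) then true else false.

Lemma has_faithful_reprbP (gT : finGroupType) (G : {group gT}) n :
  reflect (has_faithful_repr G n) (has_faithful_reprb G n).
Proof. by rewrite /has_faithful_reprb; case: excluded_middle_informative => h; constructor. Qed.

Lemma has_faithful_repr_ex (gT : finGroupType) (G : {group gT}) :
  exists n, has_faithful_reprb G n.
Proof.
exists #|G|; apply/has_faithful_reprbP.
by exists (regular_repr algC G); apply: regular_mx_faithful.
Qed.

Definition m_faithful (gT : finGroupType) (G : {group gT}) : nat :=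
  ex_minn (has_faithful_repr_ex G).

From HB Require Import structures.
From mathcomp Require Import all_boot all_order all_algebra all_fingroup all_solvable all_field all_character.
Set Implicit Arguments. Unset Strict Implicit. Unset Printing Implicit Defensive.

(* The nontrivial subgroups of a cyclic p-group C form a chain, so they all contain
   the subgroup of order p; a character of C is therefore faithful exactly when one
   of its (linear) irreducible constituents lambda is.  If rho is a faithful
   representation of C ><| H, the constituents of its restriction to C are stable
   under H, and since lambda is injective, the conjugates lambda^h, h in H, are at
   least as many as the conjugates a^h; this bounds deg rho below by |Ha|.
   Conversely Ind lambda has degree |H| and kernel the core of ker lambda = 1. *)

Import Order.TTheory GRing.Theory Num.Theory.

Lemma card_imset_le_factor (aT rT1 rT2 : finType) (A : {pred aT})
    (f : aT -> rT1) (g : aT -> rT2) :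
  {in A &, forall x y, g x = g y -> f x = f y} -> #|f @: A| <= #|g @: A|.
Proof.
move=> gf; have [-> | [_ /imsetP[x0 Ax0 _]]] := set_0Vmem (f @: A).
  by rewrite cards0.
pose h y := if [pick x in A | g x == y] is Some x then f x else f x0.
apply: leq_trans (leq_imset_card h _); apply: subset_leq_card.
apply/subsetP=> _ /imsetP[x Ax ->]; apply/imsetP; exists (g x).
  by apply/imsetP; exists x.
rewrite /h; case: pickP => [x' /andP[Ax' /eqP /(gf _ _ Ax' Ax)] | /(_ x)] //.
by rewrite Ax eqxx.
Qed.

Section MinimalFaithfulDegree.

Variables (gT : finGroupType) (G : {group gT}).

Lemma m_faithful_min d : has_faithful_repr G d -> m_faithful G <= d.
Proof. by move/has_faithful_reprbP; rewrite /m_faithful; case: ex_minnP => m _; apply. Qed.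

Lemma m_faithful_ge k :
  (forall d, has_faithful_repr G d -> k <= d) -> k <= m_faithful G.
Proof.
by rewrite /m_faithful => lb_k; case: ex_minnP => m /has_faithful_reprbP /lb_k.
Qed.

End MinimalFaithfulDegree.

Section CyclicPgroup.

Local Open Scope ring_scope.
Local Open Scope group_scope.

Variables (gT : finGroupType) (p : nat) (C : {group gT}).
Hypotheses (pC : p.-group C) (cycC : cyclic C).

Lemma cyclic_pgroup_order_p_mem (K : {group gT}) z :
  z \in C -> #[z] = p -> K \subset C -> K :!=: 1 -> z \in K.
Proof.
move=> Cz oz sKC ntK.
have [pr_p pK _] := pgroup_pdiv (pgroupS sKC pC) ntK.
have [w Kw ow] := Cauchy pr_p pK.
have def_w : <[w]> = <[z]> :> {set gT}.
  apply/eqP; rewrite (eq_subG_cyclic cycC) ?cycle_subG ?Cz ?(subsetP sKC w Kw) //.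
  by apply/eqP; rewrite -[LHS]/#[w] -[RHS]/#[z] ow oz.
by rewrite -cycle_subG -def_w cycle_subG.
Qed.

Lemma cyclic_pgroup_faithful_constt (psi : 'CF(C)) :
    C :!=: 1 -> psi \is a character -> cfaithful psi ->
  exists2 j, j \in irr_constt psi & cfaithful 'chi_j.
Proof.
move=> ntC Npsi ffpsi.
have [pr_p pC_dvd _] := pgroup_pdiv pC ntC.
have [z Cz oz] := Cauchy pr_p pC_dvd.
have z_ker: z \notin cfker psi.
  apply: contraL (prime_gt1 pr_p) => /(subsetP ffpsi)/set1P z1.
  by rewrite -oz z1 order1.
have [j Cj zj] : exists2 j, j \in irr_constt psi & z \notin cfker 'chi_j.
  apply/exists_inP; apply: contraR z_ker; rewrite negb_exists_in => /forall_inP zK.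
  by rewrite cfkerE // inE Cz; apply/bigcapP=> i /zK; rewrite negbK.
exists j => //; apply: contraR zj; rewrite /cfaithful subG1 => ntK.
exact: cyclic_pgroup_order_p_mem Cz oz (cfker_sub _) ntK.
Qed.

End CyclicPgroup.

Section CharacterBounds.

Local Open Scope ring_scope.

Variable gT : finGroupType.

Lemma card_irr_constt_le_char1 (G : {group gT}) (chi : 'CF(G)) :
  chi \is a character -> #|irr_constt chi|%:R <= chi 1%g.
Proof.
move=> Nchi; rewrite [chi in X in _ <= X]cfun_sum_constt sum_cfunE -sumr_const.
apply: ler_sum => i; rewrite irr_consttE cfunE => Ci.
have /natrP[m Dm] := Cnat_cfdot_char_irr i Nchi.
have /natrP[e De] := Cnat_irr1 i.
have e_gt0 : (0 < e)%N by rewrite -(ltr0n algC) -De irr1_gt0.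
by rewrite Dm De -natrM ler1n muln_gt0 e_gt0 andbT lt0n -(pnatr_eq0 algC) -Dm.
Qed.

Lemma card_orbit_le_Res_constt (C H G : {group gT}) a
    (phi : 'CF(G)) (j : Iirr C) :
    H \subset G -> (H \subset 'N(C))%g -> a \in C ->
    j \in irr_constt ('Res[C] phi) -> 'chi_j \is a linear_char -> cfaithful 'chi_j ->
  (#|(a ^: H)%g| <= #|irr_constt ('Res[C] phi)|)%N.
Proof.
move=> sHG nCH Ca Cj lin_j ffj.
have CaH h : h \in H -> (a ^ h)%g \in C by move=> Hh; rewrite memJ_norm ?(subsetP nCH).
have chi_jJ h x : h \in H -> 'chi_(conjg_Iirr j h^-1) x = 'chi_j (x ^ h)%g.
  by move=> Hh; rewrite conjg_IirrE cfConjgE ?invgK ?groupV ?(subsetP nCH).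
apply: leq_trans (card_imset_le_factor (g := fun h => conjg_Iirr j h^-1) _) _.
  move=> h1 h2 Hh1 Hh2 eq_j; apply: (fful_lin_char_inj lin_j ffj); rewrite ?CaH //.
  by rewrite -!chi_jJ // eq_j.
apply/subset_leq_card/subsetP=> _ /imsetP[h Hh ->].
by rewrite irr_consttE conjg_IirrE cfdot_Res_conjg ?groupV ?(subsetP sHG).
Qed.

Lemma orbit_le_faithful_char1 (p : nat) (C H G : {group gT}) a
    (chi : 'CF(G)) :
    (p.-group C)%g -> cyclic C -> C :!=: 1%g -> C \subset G -> H \subset G ->
    (H \subset 'N(C))%g -> a \in C -> chi \is a character -> cfaithful chi ->
  #|(a ^: H)%g|%:R <= chi 1%g.
Proof.
move=> pC cycC ntC sCG sHG nCH Ca Nchi ffchi.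
have NchiC := cfRes_char C Nchi.
have ffchiC : cfaithful ('Res[C] chi).
  by rewrite /cfaithful cfker_Res //; apply: subIset; apply/orP; right.
have [j Cj ffj] := cyclic_pgroup_faithful_constt pC cycC ntC NchiC ffchiC.
have lin_j : 'chi_j \is a linear_char by apply/char_abelianP/cyclic_abelian.
rewrite -(cfRes1 C) (le_trans _ (card_irr_constt_le_char1 NchiC)) // ler_nat.
exact: card_orbit_le_Res_constt Cj lin_j ffj.
Qed.

Lemma has_faithful_repr_Ind (C G : {group gT}) (j : Iirr C) :
    C \subset G -> 'chi_j \is a linear_char -> cfaithful 'chi_j ->
  has_faithful_repr G #|G : C|%g.
Proof.
move=> sCG lin_j ffj.
have [[d rG] DrG] := char_reprP (cfInd_char G (irr_char j)).
have -> : #|G : C|%g = d.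
  by apply/eqP; rewrite -(eqr_nat algC) -(cfRepr1 rG) -DrG cfInd1 // lin_char1 // mulr1.
exists rG; rewrite /mx_faithful -cfker_repr -DrG cfker_Ind_irr //.
exact: subset_trans (gcore_sub _ _) ffj.
Qed.

End CharacterBounds.

Theorem proposition1p4 (gT : finGroupType) (p n : nat) (C H G : {group gT}) (a : gT) :
  prime p -> 1 <= n ->
  (C ><| H)%g = G -> C = <[a]>%G -> #|C| = p ^ n ->
  #|(a ^: H)%g| <= m_faithful G /\
  ('C_H(C)%g = 1%g -> m_faithful G = #|(a ^: H)%g|).
Proof.
move=> pr_p n_gt0 defG defC oC.
have [nsCG sHG _ nCH _] := sdprod_context defG.
have sCG := normal_sub nsCG.
have pC : (p.-group C)%g by rewrite /pgroup oC pnatX pnat_id.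
have ntC : C :!=: 1%g by rewrite -cardG_gt1 oC -(expn0 p) ltn_exp2l ?prime_gt1.
have cycC : cyclic C by rewrite defC cycle_cyclic.
have Ca : a \in C by rewrite defC cycle_id.
have lb : #|(a ^: H)%g| <= m_faithful G.
  apply: m_faithful_ge => d [rG ffrG]; rewrite -(ler_nat algC) -(cfRepr1 rG).
  apply: orbit_le_faithful_char1 pC cycC ntC sCG sHG nCH Ca (cfRepr_char rG) _.
  by rewrite /cfaithful cfker_repr.
split=> //; rewrite defC cent_cycle => regH.
have oaH : #|(a ^: H)%g| = #|H| by rewrite -index_cent1 regH indexg1.
apply/eqP; rewrite eqn_leq lb andbT oaH (index_sdprod defG).
have [j _ ffj] := cyclic_pgroup_faithful_constt pC cycC ntC (cfReg_char C) (cfaithful_reg C).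
apply: m_faithful_min (has_faithful_repr_Ind sCG _ ffj).
exact/char_abelianP/cyclic_abelian.
Qed.
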